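(* For every $\epsilon>0$, every $\delta>0$, and all integers $n\ge 2$ and $t$ with $1\le t\le \delta n$, there is an instance of $\mathrm{Knapsack}$ with $n$ objects (namely the uniform instance $c_i=v_i=1$ for all $i$, with a suitable capacity $C\in[1,2)$) such that $$\max\Big\{\sum_{i\in V} v_i\, y_{\{i\}} \;:\; y\in \mathrm{SA}^t(K)\Big\}\;\ge\; \frac{2-\epsilon}{1+\delta}\cdot \mathrm{OPT},$$ where $K$ is the LP relaxation of the instance and $\mathrm{OPT}$ its optimal integral value. That is, the integrality gap of the $t$-th level of the Sherali-Adams hierarchy for $\mathrm{Knapsack}$ is at least $(2-\epsilon)/(1+\delta)$ whenever $t\le\delta n$.
   Context: A $\mathrm{Knapsack}$ instance consists of objects $V=[n]$ with sizes $c_i\ge 0$, values $v_i\ge 0$ and a capacity $C$ with $c_i\le C$ for all $i$; $\mathrm{OPT}$ is the maximum of $\sum_{i\in X}v_i$ over $X\subseteq V$ with $\sum_{i\in X}c_i\le C$. Its LP relaxation is $K=\{x\in[0,1]^n: g(x)\ge 0\}$ with the single constraint $g(x)=C-\sum_{i\in V}c_ix_i$. Notation: $\mathcal P(U)$ is the power set of $U$ and $\mathcal P_t(U)$ the set of subsets of $U$ of size at most $t$. For a collection $\mathcal T$ of subsets of $V$ and a vector $y$ indexed by subsets of $V$, $M_{\mathcal T}(y)$ is the symmetric matrix with rows and columns indexed by $\mathcal T$ and $(I,J)$-entry $y_{I\cup J}$. For an affine function $g(x)=b+\sum_{j\in V}a_jx_j$, $g*y$ is the vector with $(g*y)_I=b\,y_I+\sum_{j\in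 V}a_j\,y_{I\cup\{j\}}$. The $t$-th Sherali-Adams lifted polytope of $K=\{x\in[0,1]^n: g_\ell(x)\ge0,\ \ell=1,\dots,m\}$ (with affine $g_\ell$) is $\mathrm{SA}^t(K)$, the set of $y\in[0,1]^{\mathcal P_t(V)}$ with $y_\emptyset=1$, $M_{\mathcal P(U)}(y)\succeq 0$ for every $U\subseteq V$ with $|U|\le t$, and $M_{\mathcal P(W)}(g_\ell*y)\succeq0$ for every $\ell$ and every $W\subseteq V$ with $|W|\le t-1$. *)

From HB Require Import structures.
From mathcomp Require Import all_boot all_order all_algebra.
Set Implicit Arguments. Unset Strict Implicit. Unset Printing Implicit Defensive.
Import Order.TTheory GRing.Theory Num.Theory.
Local Open Scope ring_scope.

Section KnapsackSA.
Variables (R : realFieldType) (n : nat).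

(* Optimal integral value of the Knapsack instance (sizes c, values v,
   capacity C): max of sum_{i in X} v_i over X with sum_{i in X} c_i <= C.
   (The empty set is feasible and values are nonnegative, so 0 is a
   harmless identity for the max.) *)
Definition knapOPT (c v : 'I_n -> R) (C : R) : R :=
  \big[Num.max/0]_(X : {set 'I_n} | \sum_(i in X) c i <= C) \sum_(i in X) v i.

Definition psd_on (T : {set {set 'I_n}}) (f : {set 'I_n} -> {set 'I_n} -> R)
  : Prop :=
  forall x : {set 'I_n} -> R,
    0 <= \sum_(I in T) \sum_(J in T) x I * f I J * x J.

(* g * y for g(x) = C - sum_j c_j x_j :
   (g*y)_I = C y_I - sum_j c_j y_{I u {j}}. *)
Definition knap_gstar (c : 'I_n -> R) (C : R) (y : {set 'I_n} -> R)
  (I : {set 'I_n}) : R :=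
  C * y I - \sum_(j : 'I_n) c j * y (I :|: [set j]).

(* y in SA^t(K) for K = {x in [0,1]^n : C - sum c_i x_i >= 0}.
   y is a function on all subsets; only its values on sets of size <= t
   matter (the conditions only involve such entries). *)
Definition SA_knap (t : nat) (c : 'I_n -> R) (C : R) (y : {set 'I_n} -> R)
  : Prop :=
  [/\ y set0 = 1,
      (forall S : {set 'I_n}, (#|S| <= t)%N -> 0 <= y S <= 1),
      (forall U : {set 'I_n}, (#|U| <= t)%N ->
          psd_on (powerset U) (fun I J => y (I :|: J)))
    & (forall W : {set 'I_n}, (#|W| <= t - 1)%N ->
          psd_on (powerset W) (fun I J => knap_gstar c C y (I :|: J)))].

End KnapsackSA.

From mathcomp Require Import all_boot all_order all_algebra.
From mathcomp Require Import ring lra zify.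
Import Order.TTheory GRing.Theory Num.Theory.
Local Open Scope ring_scope.
Set Implicit Arguments. Unset Strict Implicit.

(* The lower bound is witnessed, for the uniform instance with a capacity C
   just below 2, by the moment vector y of the signed measure with mass
   [1 - n p] on the empty set and [p] on each singleton.  Restricted to the
   subsets of a set U, the singletons outside U look like the empty set, so
   the moment matrix on U is a combination of rank-one matrices with weights
   [p] and [1 - p |U|]; the constraint [C - sum_i x_i] turns y into the moment
   vector with masses [C (1 - n p)] and [(C - 1) p], whose matrices are handled
   the same way.  With [p = C / (n + t - 1)] all weights are nonnegative up to
   level [t < n], and the SA value [n p] is at least [C / (1 + delta)] while
   OPT = 1.  For [t >= n] one has [delta >= 1], and [p = 1/n] with [C = 1]
   already gives ratio 1. *)

Section PsdOn.
Variables (R : realFieldType) (n : nat) (T : {set {set 'I_n}}).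
Implicit Types f g : {set 'I_n} -> {set 'I_n} -> R.

Lemma psd_on_ext f g : {in T &, f =2 g} -> psd_on T g -> psd_on T f.
Proof.
move=> fg g_psd x; rewrite (eq_bigr (fun I => \sum_(J in T) x I * g I J * x J)).
  exact: g_psd.
by move=> I IT; apply: eq_bigr => J JT; rewrite fg.
Qed.

Lemma psd_on_rank1 (a : R) (e : {set 'I_n} -> R) :
  0 <= a -> psd_on T (fun I J => a * e I * e J).
Proof.
move=> a_ge0 x.
have -> : \sum_(I in T) \sum_(J in T) x I * (a * e I * e J) * x J
          = a * (\sum_(I in T) x I * e I) ^+ 2.
  rewrite expr2 mulr_suml mulr_sumr; apply: eq_bigr => I _.
  rewrite !mulr_sumr; apply: eq_bigr => J _; ring.
by rewrite mulr_ge0 ?sqr_ge0.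
Qed.

Lemma psd_onD f g : psd_on T f -> psd_on T g -> psd_on T (fun I J => f I J + g I J).
Proof.
move=> f_psd g_psd x.
have -> : \sum_(I in T) \sum_(J in T) x I * (f I J + g I J) * x J
   = \sum_(I in T) \sum_(J in T) x I * f I J * x J
     + \sum_(I in T) \sum_(J in T) x I * g I J * x J.
  rewrite -big_split; apply: eq_bigr => I _; rewrite -big_split.
  by apply: eq_bigr => J _; rewrite mulrDr mulrDl.
exact: addr_ge0.
Qed.

Lemma psd_on_sum (S : finType) (P : {pred S}) (F : S -> {set 'I_n} -> {set 'I_n} -> R) :
  (forall i, P i -> psd_on T (F i)) -> psd_on T (fun I J => \sum_(i | P i) F i I J).
Proof.
move=> F_psd x.
have -> : \sum_(K in T) \sum_(L in T) x K * (\sum_(i | P i) F i K L) * x L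
          = \sum_(i | P i) \sum_(K in T) \sum_(L in T) x K * F i K L * x L.
  rewrite [RHS]exchange_big; apply: eq_bigr => K _; rewrite [RHS]exchange_big.
  by apply: eq_bigr => L _; rewrite mulr_sumr mulr_suml.
by apply: sumr_ge0 => i Pi; exact: F_psd.
Qed.

End PsdOn.

Lemma subset_set1_notin (T : finType) (U K : {set T}) (i : T) :
  K \subset U -> i \notin U -> (K \subset [set i]) = (K == set0).
Proof.
move=> KU iU; rewrite subset1; case: eqP => [KE | _] //=.
by rewrite KE sub1set in KU; rewrite KU in iU.
Qed.

Section SingletonMoments.
Variables (R : realFieldType) (n : nat).
Implicit Types (al be : R) (K U : {set 'I_n}).

Lemma card_le_ord K : (#|K| <= n)%N.
Proof. by rewrite -[X in (_ <= X)%N]card_ord max_card. Qed.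

(* Moments of the signed measure with mass [al] on the empty set and [be] on
   each singleton. *)
Definition sing_moment al be K : R :=
  al * (K == set0)%:R + \sum_i be * (K \subset [set i])%:R.

Lemma sing_moment_set0 al be : sing_moment al be set0 = al + n%:R * be.
Proof.
rewrite /sing_moment eqxx mulr1; congr (_ + _).
under eq_bigr do rewrite sub0set mulr1.
by rewrite sumr_const card_ord mulr_natl.
Qed.

Lemma sing_moment_nonempty al be K x :
  x \in K -> sing_moment al be K = be * (K \subset [set x])%:R.
Proof.
move=> xK; have /negbTE K_neq0 : K != set0 by apply/set0Pn; exists x.
rewrite /sing_moment K_neq0 mulr0 add0r (bigD1 x) //= big1 ?addr0 // => i /negbTE ix.
suff /negbTE-> : ~~ (K \subset [set i]) by rewrite mulr0.
by apply: contraFN ix => /subsetP/(_ x xK); rewrite in_set1 eq_sym.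
Qed.

Lemma sing_moment_set1 al be x : sing_moment al be [set x] = be.
Proof. by rewrite (sing_moment_nonempty _ _ (set11 x)) subxx mulr1. Qed.

Lemma sing_moment_bounds al be K x :
  0 <= be -> x \in K -> 0 <= sing_moment al be K <= be.
Proof.
move=> be_ge0 /(sing_moment_nonempty al be)->.
by case: (K \subset _); rewrite ?mulr1 ?mulr0 lexx ?be_ge0.
Qed.

Lemma sum_sing_moment_set1 al be : \sum_i 1 * sing_moment al be [set i] = n%:R * be.
Proof.
under eq_bigr do rewrite mul1r sing_moment_set1.
by rewrite sumr_const card_ord mulr_natl.
Qed.

(* Restricted to subsets of [U], a singleton outside [U] looks like the empty set. *)
Lemma sing_moment_sub al be U K : K \subset U ->
  sing_moment al be K
  = (al + be * #|~: U|%:R) * (K == set0)%:R + \sum_(i in U) be * (K \subset [set i])%:R.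
Proof.
move=> KU; rewrite /sing_moment (bigID (mem U)) /=.
have -> : \sum_(i | i \notin U) be * (K \subset [set i])%:R
          = be * #|~: U|%:R * (K == set0)%:R.
  rewrite (eq_bigl (fun i => i \in ~: U)) => [|i]; last by rewrite inE.
  rewrite (eq_bigr (fun=> be * (K == set0)%:R)) => [|i]; last first.
    by rewrite inE => iU; rewrite (subset_set1_notin KU).
  by rewrite sumr_const [RHS]mulrAC [RHS]mulr_natr.
by rewrite mulrDl -!addrA [X in _ + X]addrC.
Qed.

Lemma psd_sing_moment al be U :
  0 <= be -> 0 <= al + be * (n%:R - #|U|%:R) ->
  psd_on (powerset U) (fun I J => sing_moment al be (I :|: J)).
Proof.
move=> be_ge0 mass_ge0.
have cardC : #|~: U|%:R = n%:R - #|U|%:R :> R.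
  by apply/eqP; rewrite eq_sym subr_eq -natrD addnC cardsC card_ord.
apply: (psd_on_ext (g := fun I J => (al + be * #|~: U|%:R) * (I == set0)%:R * (J == set0)%:R
            + \sum_(i in U) be * (I \subset [set i])%:R * (J \subset [set i])%:R)).
  move=> I J; rewrite !powersetE => IU JU.
  have IJU : I :|: J \subset U by rewrite subUset IU.
  rewrite (sing_moment_sub _ _ IJU) setU_eq0 -mulnb natrM mulrA; congr (_ + _).
  by apply: eq_bigr => i _; rewrite subUset -mulnb natrM mulrA.
apply: psd_onD; first by apply: psd_on_rank1; rewrite cardC.
by apply: psd_on_sum => i _; exact: psd_on_rank1.
Qed.

Lemma knap_gstar_sing_moment C al be K :
  knap_gstar (fun _ => 1) C (sing_moment al be) K = sing_moment (C * al) ((C - 1) * be) K.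
Proof.
rewrite /knap_gstar.
have -> : \sum_j 1 * sing_moment al be (K :|: [set j]) = \sum_i be * (K \subset [set i])%:R.
  apply: eq_bigr => j _; have jKj : j \in K :|: [set j] by rewrite !inE eqxx orbT.
  by rewrite mul1r (sing_moment_nonempty _ _ jKj) subUset subxx andbT.
rewrite /sing_moment mulrDr mulrA -addrA mulr_sumr -sumrB; congr (_ + _).
by apply: eq_bigr => i _; ring.
Qed.

Lemma SA_knap_sing_moment t C al p :
  al + n%:R * p = 1 -> 0 <= p <= 1 -> 1 <= C ->
  (forall u, (u <= t)%N -> (u <= n)%N -> p * u%:R <= 1) ->
  (forall w, (w <= t - 1)%N -> (w <= n)%N -> n%:R * p + (C - 1) * p * w%:R <= C) ->
  SA_knap t (fun _ => 1) C (sing_moment al p).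
Proof.
move=> mass1 /andP[p_ge0 p_le1] C_ge1 colU colW; split.
- by rewrite sing_moment_set0.
- move=> S _; have [->|[x xS]] := set_0Vmem S.
    by rewrite sing_moment_set0 mass1 lexx ler01.
  by have /andP[-> /le_trans->] := sing_moment_bounds al p_ge0 xS.
- move=> U /colU /(_ (card_le_ord U)) pU_le1; apply: psd_sing_moment => //; lra.
- move=> W /colW /(_ (card_le_ord W)) gW_leC.
  apply: (psd_on_ext (g := fun I J => sing_moment (C * al) ((C - 1) * p) (I :|: J))).
    by move=> I J _ _; rewrite knap_gstar_sing_moment.
  apply: psd_sing_moment; first by rewrite mulr_ge0 // subr_ge0.
  have -> : al = 1 - n%:R * p by lra.
  lra.
Qed.

End SingletonMoments.

Lemma knapOPT_unit_bounds (R : realFieldType) (n : nat) (C : R) :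
  C < 2 -> 0 <= knapOPT (fun _ : 'I_n => 1) (fun _ : 'I_n => 1) C <= 1.
Proof.
move=> C_lt2; rewrite /knapOPT; apply/andP; split.
  by apply: (big_ind (fun x : R => 0 <= x)) => // [a b a0 b0 | X _];
    rewrite ?le_max ?a0 ?sumr_ge0.
apply: (big_ind (fun x : R => x <= 1)) => // [a b a1 b1 | X]; first by rewrite ge_max a1.
rewrite sumr_const => X_le_C.
have : (#|X| < 2)%N by rewrite -(ltr_nat R) (le_lt_trans X_le_C C_lt2).
by rewrite lern1.
Qed.

Lemma le_scale_knapOPT_unit (R : realFieldType) (n : nat) (C k v : R) :
  C < 2 -> 0 <= v -> k <= v ->
  k * knapOPT (fun _ : 'I_n => 1) (fun _ : 'I_n => 1) C <= v.
Proof.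
move=> /(knapOPT_unit_bounds n) /andP[opt_ge0 opt_le1] v_ge0 k_le_v.
have [k_ge0 | k_lt0] := leP 0 k.
  by rewrite (le_trans _ k_le_v) // ler_piMr.
by rewrite (le_trans _ v_ge0) // mulr_le0_ge0 // ltW.
Qed.

Lemma SA_knap_uniform_singletons (R : realFieldType) (n t : nat) : (0 < n)%N ->
  SA_knap t (fun _ : 'I_n => 1) (1 : R) (sing_moment 0 n%:R^-1).
Proof.
move=> n_gt0; have n_neq0 : n%:R != 0 :> R by rewrite pnatr_eq0 -lt0n.
apply: SA_knap_sing_moment => //.
- by rewrite add0r mulfV.
- by rewrite invr_ge0 ler0n invf_le1 ?ler1n ?ltr0n.
- by move=> u _ u_le_n; rewrite mulrC ler_pdivrMr ?ltr0n // mul1r ler_nat.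
- by move=> w _ _; rewrite subrr !mul0r addr0 mulfV.
Qed.

Lemma SA_knap_partial_level (R : realFieldType) (n t : nat) (C : R) :
  (0 < t)%N -> (t < n)%N -> 1 <= C <= 2 ->
  SA_knap t (fun _ : 'I_n => 1) C
    (sing_moment (1 - n%:R * (C / (n + t.-1)%:R)) (C / (n + t.-1)%:R)).
Proof.
move=> t_gt0 t_lt_n /andP[C_ge1 C_le2].
set D := (n + t.-1)%:R; set p := C / D.
have D_gt0 : 0 < D by rewrite ltr0n; lia.
have p_ge0 : 0 <= p by rewrite divr_ge0 ?ltW // (lt_le_trans ltr01 C_ge1).
(* [C t <= 2 t <= n + t - 1] because [t < n] *)
have pt_le1 : p * t%:R <= 1.
  rewrite mulrAC ler_pdivrMr // mul1r (le_trans (ler_wpM2r (ler0n _ _) C_le2)) //.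
  by rewrite -natrM ler_nat; lia.
apply: SA_knap_sing_moment => //.
- by rewrite subrK.
- by rewrite p_ge0 (le_trans _ pt_le1) // ler_peMr // ler1n.
- by move=> u u_le_t _; rewrite (le_trans _ pt_le1) // ler_wpM2l // ler_nat.
- move=> w w_le_t _; rewrite subn1 in w_le_t.
  apply: (@le_trans _ _ (n%:R * p + p * t.-1%:R)).
    rewrite lerD2l [_ * p]mulrC -mulrA ler_wpM2l //.
    by rewrite (le_trans (ler_wpM2r (ler0n _ _) (_ : C - 1 <= 1))) ?mul1r ?ler_nat //; lra.
  by rewrite mulrC -mulrDr -natrD divfK // lt0r_neq0.
Qed.

Lemma le_partial_level_objective (R : realFieldType) (n t : nat) (C delta : R) :
  (0 < n)%N -> 0 <= C -> 0 < delta -> t%:R <= delta * n%:R ->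
  C / (1 + delta) <= n%:R * (C / (n + t.-1)%:R).
Proof.
move=> n_gt0 C_ge0 delta_gt0 t_le_dn; set D := (n + t.-1)%:R.
have D_gt0 : 0 < D by rewrite ltr0n addn_gt0 n_gt0.
have delta1_gt0 : 0 < 1 + delta by rewrite addr_gt0.
have gap_ge1 : 1 <= n%:R * (1 + delta) / D.
  rewrite ler_pdivlMr // mul1r /D natrD mulrDr mulr1 lerD2l mulrC (le_trans _ t_le_dn) //.
  by rewrite ler_nat leq_pred.
have -> : n%:R * (C / D) = C / (1 + delta) * (n%:R * (1 + delta) / D).
  by field; rewrite -natrD !lt0r_neq0.
by rewrite ler_peMr // divr_ge0 // ltW.
Qed.

Theorem mainTheorem1 (R : realFieldType) (eps delta : R) (n t : nat) :
  0 < eps -> 0 < delta -> (2 <= n)%N -> (1 <= t)%N ->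
  (t%:R <= delta * n%:R) ->
  exists C : R, [/\ 1 <= C, C < 2 &
    exists y : {set 'I_n} -> R,
      SA_knap t (fun _ : 'I_n => 1) C y /\
      (2 - eps) / (1 + delta) * knapOPT (fun _ : 'I_n => 1) (fun _ : 'I_n => 1) C
        <= \sum_(i : 'I_n) 1 * y [set i]].
Proof.
move=> eps_gt0 delta_gt0 n_ge2 t_ge1 t_le_dn.
have n_gt0 : (0 < n)%N by exact: leq_trans n_ge2.
have n_gt0R : 0 < n%:R :> R by rewrite ltr0n.
have delta1_gt0 : 0 < 1 + delta by lra.
have [n_le_t | t_lt_n] := leqP n t.
  have delta_ge1 : 1 <= delta.
    by rewrite -(ler_pM2r n_gt0R) mul1r (le_trans _ t_le_dn) // ler_nat.
  exists 1; split; rewrite ?ltr1n //; exists (sing_moment 0 n%:R^-1); split.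
    exact: SA_knap_uniform_singletons.
  apply: le_scale_knapOPT_unit; rewrite ?ltr1n // sum_sing_moment_set1 mulfV ?lt0r_neq0 //.
  by rewrite ler_pdivrMr ?mul1r; lra.
pose mu := Num.min eps 1; pose C := 2 - mu.
have [mu_gt0 mu_le_eps mu_le1] : [/\ 0 < mu, mu <= eps & mu <= 1].
  by rewrite lt_min eps_gt0 ltr01 !ge_min !lexx ?orbT.
have [C_ge1 C_lt2] : 1 <= C /\ C < 2 by rewrite /C; split; lra.
have C_gt0 : 0 < C by exact: lt_le_trans ltr01 C_ge1.
exists C; split=> //.
pose p := C / (n + t.-1)%:R.
exists (sing_moment (1 - n%:R * p) p); split.
  by apply: SA_knap_partial_level; rewrite // C_ge1 ltW.
apply: le_scale_knapOPT_unit C_lt2 _ _; rewrite sum_sing_moment_set1.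
  by rewrite mulr_ge0 ?divr_ge0 ?ler0n ?ltW.
apply: le_trans (le_partial_level_objective n_gt0 (ltW C_gt0) delta_gt0 t_le_dn).
by rewrite ler_pM2r ?invr_gt0 // /C; lra.
Qed.
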